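(* In the multi-parameter setting described in the context, for every Kraus representation $\{E_k(\theta)\}$ of the channel and every POVM $\{M_m\}$, $F_M(\theta)\le C_E(\theta)$ as $m\times m$ real symmetric matrices.
   Context: A multi-parameter quantum channel on density matrices on $\mathbb{C}^d$ is $\rho_0\mapsto\sum_kE_k(\theta)\rho_0E_k(\theta)^\dagger$ with $\theta=(\theta^1,\dots,\theta^m)\in\mathbb{R}^m$, Kraus operators differentiable, $\sum_kE_k^\dagger E_k=I$. The input is a fixed pure state $\rho_0=|\psi_0\rangle\langle\psi_0|$ with output $\rho_{out}(\theta)$. Write $X^{(j)}=\partial X/\partial\theta^j$. $C_E(\theta)_{jk}=4\sum_l\mathrm{Re}\,\mathrm{tr}\{E_l^{(j)}\rho_0E_l^{(k)\dagger}\}$. For a POVM $\{M_m\}$ (Hermitian, nonnegative, summing to $I$) with $p(m;\theta)=\mathrm{tr}\{\rho_{out}(\theta)M_m\}$, the Fisher information matrix is $F_M(\theta)_{jk}=\sum_m p(m;\theta)^{-1}\frac{\partial p(m;\theta)}{\partial\theta^j}\frac{\partial p(m;\theta)}{\partial\theta^k}$. *)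

From HB Require Import structures.
From mathcomp Require Import all_boot all_order all_algebra.
From mathcomp Require Import all_classical all_reals all_analysis.
From mathcomp Require Import complex.
Set Implicit Arguments. Unset Strict Implicit. Unset Printing Implicit Defensive.
Import Order.TTheory GRing.Theory Num.Theory.
Local Open Scope ring_scope.

Definition cmx (R : rcfType) n p (A B : 'M[R]_(n, p)) : 'M[R[i]]_(n, p) :=
  \matrix_(i, j) Complex (A i j) (B i j).

Definition adj (R : rcfType) n p (A : 'M[R[i]]_(n, p)) : 'M[R[i]]_(p, n) :=
  (map_mx (@conjc R) A)^T.

Definition pdv (R : realType) (m : nat) (W : normedModType R)
  (f : 'rV[R]_m -> W) (j : 'I_m) (th : 'rV[R]_m) : W :=
  derive f th (delta_mx 0 j).

Section Channel.
Variables (R : realType) (d m : nat) (K : finType).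
(* Kraus operators E_k(theta) = ER k theta + i EI k theta *)
Variables (ER EI : K -> 'rV[R]_m -> 'M[R]_d).

Definition kraus (k : K) (th : 'rV[R]_m) : 'M[R[i]]_d := cmx (ER k th) (EI k th).

Definition dkraus (k : K) (j : 'I_m) (th : 'rV[R]_m) : 'M[R[i]]_d :=
  cmx (pdv (ER k) j th) (pdv (EI k) j th).

Definition is_kraus_family : Prop :=
  (forall k th, differentiable (ER k) th /\ differentiable (EI k) th) /\
  (forall th, \sum_k adj (kraus k th) *m kraus k th = 1%:M).

Definition rho_pure (psi : 'cV[R[i]]_d) : 'M[R[i]]_d := psi *m adj psi.

Definition rho_out (psi : 'cV[R[i]]_d) (th : 'rV[R]_m) : 'M[R[i]]_d :=
  \sum_k kraus k th *m rho_pure psi *m adj (kraus k th).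

Definition CE_mx (psi : 'cV[R[i]]_d) (th : 'rV[R]_m) : 'M[R]_m :=
  \matrix_(j, k) (4 * \sum_l complex.Re
      (\tr (dkraus l j th *m rho_pure psi *m adj (dkraus l k th)))).

Variable (O : finType).
(* p(o; theta) = tr(rho_out(theta) M_o)  (a real number; we take its real part) *)
Definition prob (psi : 'cV[R[i]]_d) (M : O -> 'M[R[i]]_d) (o : O)
  (th : 'rV[R]_m) : R := complex.Re (\tr (rho_out psi th *m M o)).

(* classical Fisher information matrix; terms with p = 0 contribute 0
   since 0^-1 = 0 in MathComp *)
Definition fisher_mx (psi : 'cV[R[i]]_d) (M : O -> 'M[R[i]]_d)
  (th : 'rV[R]_m) : 'M[R]_m :=
  \matrix_(j, k) \sum_o ((prob psi M o th)^-1
      * pdv (prob psi M o) j th * pdv (prob psi M o) k th).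
End Channel.

Definition is_POVM (R : rcfType) (d : nat) (O : finType)
  (M : O -> 'M[R[i]]_d) : Prop :=
  (forall o, adj (M o) = M o) /\
  (forall o (v : 'cV[R[i]]_d), 0 <= (adj v *m M o *m v) 0 0) /\
  \sum_o M o = 1%:M.

Definition loewner_le (R : realType) (m : nat) (A B : 'M[R]_m) : Prop :=
  forall v : 'cV[R]_m, (v^T *m A *m v) 0 0 <= (v^T *m B *m v) 0 0.

From HB Require Import structures.
From mathcomp Require Import all_boot all_order all_algebra.
From mathcomp Require Import all_classical all_reals all_analysis.
From mathcomp Require Import complex.
From mathcomp Require Import ring lra.
Set Implicit Arguments. Unset Strict Implicit. Unset Printing Implicit Defensive.
Import Order.TTheory GRing.Theory Num.Theory.
Local Open Scope ring_scope.
Local Open Scope classical_set_scope.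

(* Fix a direction w in parameter space and put a_l = E_l psi and
   b_l = sum_j w_j E_l^(j) psi.  Then p(o) = sum_l <a_l, M_o a_l> and the
   derivative of p(o) along w is 2 sum_l Re <a_l, M_o b_l>, so
   w^T F_M w = sum_o (2 sum_l Re <a_l, M_o b_l>)^2 / p(o).  As M_o >= 0, the
   Cauchy-Schwarz inequality for the semi-inner product
   (u, u') |-> sum_l Re <u_l, M_o u'_l> bounds the o-th term by
   4 sum_l <b_l, M_o b_l>; summing over o with sum_o M_o = I leaves
   4 sum_l |b_l|^2 = w^T C_E w. *)

Section ComplexParts.
Variable R : rcfType.

Lemma ReD (x y : R[i]) : complex.Re (x + y) = complex.Re x + complex.Re y.
Proof. exact: (raddfD (@complex.Re R : Rcomplex R -> R)). Qed.

Lemma ImD (x y : R[i]) : complex.Im (x + y) = complex.Im x + complex.Im y.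
Proof. exact: (raddfD (@complex.Im R : Rcomplex R -> R)). Qed.

Lemma Re_sum (I : finType) (f : I -> R[i]) :
  complex.Re (\sum_i f i) = \sum_i complex.Re (f i).
Proof. exact: (raddf_sum (@complex.Re R : Rcomplex R -> R)). Qed.

Lemma Re_conj (z : R[i]) : complex.Re (z^*%C) = complex.Re z.
Proof. by case: z. Qed.

Lemma Im_conj (z : R[i]) : complex.Im (z^*%C) = - complex.Im z.
Proof. by case: z. Qed.

Lemma Re_realM (c : R) (z : R[i]) : complex.Re (c%:C%C * z) = c * complex.Re z.
Proof. by case: z => [? ?] /=; ring. Qed.

End ComplexParts.

(* [R[i]] is not a normed module over [R], so derivatives of complex-valued
   maps are taken on the real and imaginary parts separately. *)
Section ComplexDerivative.
Variables (R : realType) (V : normedModType R).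
Implicit Types (x v : V).

Lemma is_derive_mx_entry p q (F : V -> 'M[R]_(p, q)) x v a b :
  derivable F x v -> is_derive x v (fun y => F y a b) ('D_v F x a b).
Proof.
move=> dF.
have cvF : (fun h : R => h^-1 *: ((F \o shift x) (h *: v) - F x)) @ 0^' -->
    'D_v F x := dF.
have := cvg_comp _ _ cvF (@coord_continuous R p q a b ('D_v F x)).
have -> : (fun N : 'M[R]_(p, q) => N a b) \o
      (fun h : R => h^-1 *: ((F \o shift x) (h *: v) - F x)) =
    (fun h : R => h^-1 *: (((fun y => F y a b) \o shift x) (h *: v) - F x a b)).
  by apply/funext => h /=; rewrite !mxE.
move=> cv; apply: DeriveDef; first by apply/cvg_ex; exists ('D_v F x a b).
exact: cvg_lim.
Qed.

Definition is_cderive x v (F : V -> R[i]) (dF : R[i]) :=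
  is_derive x v (fun y => complex.Re (F y)) (complex.Re dF) /\
  is_derive x v (fun y => complex.Im (F y)) (complex.Im dF).

Lemma is_cderive_cst x v (c : R[i]) : is_cderive x v (fun=> c) 0.
Proof. by split; apply: is_derive_cst. Qed.

Lemma is_cderiveD x v (F G : V -> R[i]) dF dG :
  is_cderive x v F dF -> is_cderive x v G dG ->
  is_cderive x v (fun y => F y + G y) (dF + dG).
Proof.
move=> [Fre Fim] [Gre Gim]; split.
- under eq_fun do rewrite ReD; rewrite ReD; exact: (is_deriveD Fre Gre).
- under eq_fun do rewrite ImD; rewrite ImD; exact: (is_deriveD Fim Gim).
Qed.

Lemma is_cderiveM x v (F G : V -> R[i]) dF dG :
  is_cderive x v F dF -> is_cderive x v G dG ->
  is_cderive x v (fun y => F y * G y) (dF * G x + F x * dG).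
Proof.
move=> [Fre Fim] [Gre Gim]; split.
- have -> : (fun y => complex.Re (F y * G y)) = (fun y =>
      complex.Re (F y) * complex.Re (G y) - complex.Im (F y) * complex.Im (G y)).
    by apply/funext => y; case: (F y) (G y) => [? ?] [? ?].
  apply: is_derive_eq (is_deriveB (is_deriveM Fre Gre) (is_deriveM Fim Gim)) _.
  by move: (dF) (dG) (F x) (G x) => [? ?] [? ?] [? ?] [? ?]; rewrite /GRing.scale /=; ring.
- have -> : (fun y => complex.Im (F y * G y)) = (fun y =>
      complex.Re (F y) * complex.Im (G y) + complex.Im (F y) * complex.Re (G y)).
    by apply/funext => y; case: (F y) (G y) => [? ?] [? ?].
  apply: is_derive_eq (is_deriveD (is_deriveM Fre Gim) (is_deriveM Fim Gre)) _.
  by move: (dF) (dG) (F x) (G x) => [? ?] [? ?] [? ?] [? ?]; rewrite /GRing.scale /=; ring.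
Qed.

Lemma is_cderive_conj x v (F : V -> R[i]) dF :
  is_cderive x v F dF -> is_cderive x v (fun y => (F y)^*%C) (dF^*%C).
Proof.
move=> [Fre Fim]; split.
- by under eq_fun do rewrite Re_conj; rewrite Re_conj.
- under eq_fun do rewrite Im_conj; rewrite Im_conj; exact: is_deriveN.
Qed.

Lemma is_cderive_sum x v (I : finType) (F : I -> V -> R[i]) dF :
  (forall i, is_cderive x v (F i) (dF i)) ->
  is_cderive x v (fun y => \sum_i F i y) (\sum_i dF i).
Proof.
move=> dFi; rewrite /index_enum; elim: (Finite.enum I) => [|i s IHs].
  by under eq_fun do rewrite big_nil; rewrite big_nil; exact: is_cderive_cst.
by under eq_fun do rewrite big_cons; rewrite big_cons; exact: is_cderiveD.
Qed.

Definition is_cderive_mx p q x v (F : V -> 'M[R[i]]_(p, q)) (dF : 'M[R[i]]_(p, q)) :=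
  forall a b, is_cderive x v (fun y => F y a b) (dF a b).

Lemma is_cderive_mx_cst p q x v (C : 'M[R[i]]_(p, q)) :
  is_cderive_mx x v (fun=> C) 0.
Proof.
by move=> a b; rewrite mxE; exact: is_cderive_cst.
Qed.

Lemma is_cderive_mx_sum p q x v (I : finType) (F : I -> V -> 'M[R[i]]_(p, q)) dF :
  (forall i, is_cderive_mx x v (F i) (dF i)) ->
  is_cderive_mx x v (fun y => \sum_i F i y) (\sum_i dF i).
Proof.
move=> dFi a b.
have -> : (fun y => (\sum_i F i y) a b) = (fun y => \sum_i F i y a b).
  by apply/funext => y; rewrite summxE.
by rewrite summxE; apply: is_cderive_sum => i; exact: dFi.
Qed.

Lemma is_cderive_mxM p q s x v (F : V -> 'M[R[i]]_(p, q))
    (G : V -> 'M[R[i]]_(q, s)) dF dG :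
  is_cderive_mx x v F dF -> is_cderive_mx x v G dG ->
  is_cderive_mx x v (fun y => F y *m G y) (dF *m G x + F x *m dG).
Proof.
move=> dFab dGab a b; under eq_fun do rewrite mxE.
rewrite !mxE -big_split.
by apply: is_cderive_sum => k; exact: is_cderiveM.
Qed.

Lemma is_cderive_mx_adj p q x v (F : V -> 'M[R[i]]_(p, q)) dF :
  is_cderive_mx x v F dF -> is_cderive_mx x v (fun y => adj (F y)) (adj dF).
Proof.
move=> dFab a b; under eq_fun do rewrite !mxE; rewrite !mxE.
exact: is_cderive_conj.
Qed.

Lemma is_cderive_trace p x v (F : V -> 'M[R[i]]_p) dF :
  is_cderive_mx x v F dF -> is_cderive x v (fun y => \tr (F y)) (\tr dF).
Proof. by move=> dFab; apply: is_cderive_sum => a; exact: dFab. Qed.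

Lemma is_cderive_mx_cmx p q x v (A B : V -> 'M[R]_(p, q)) :
  derivable A x v -> derivable B x v ->
  is_cderive_mx x v (fun y => cmx (A y) (B y)) (cmx ('D_v A x) ('D_v B x)).
Proof.
move=> dA dB a b; rewrite /cmx; split.
- by under eq_fun do rewrite mxE; rewrite mxE; exact: is_derive_mx_entry.
- by under eq_fun do rewrite mxE; rewrite mxE; exact: is_derive_mx_entry.
Qed.

End ComplexDerivative.

Lemma quadratic_discriminant_le (F : realFieldType) (P Q S : F) :
  0 <= P -> (forall s, 0 <= s * s * P + 2 * s * Q + S) -> Q ^+ 2 / P <= S.
Proof.
move=> P_ge0 quad_ge0.
have := quad_ge0 0; rewrite !(mul0r, mulr0, add0r) => S_ge0.
have [->|P_neq0] := eqVneq P 0; first by rewrite invr0 mulr0.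
have := quad_ge0 (- (Q / P)).
have -> : - (Q / P) * - (Q / P) * P = Q ^+ 2 / P by field.
have -> : 2 * - (Q / P) * Q = - 2 * (Q ^+ 2 / P) by field.
lra.
Qed.

Section Forms.
Variable R : rcfType.

Lemma adjM p q s (A : 'M[R[i]]_(p, q)) (B : 'M[R[i]]_(q, s)) :
  adj (A *m B) = adj B *m adj A.
Proof. by rewrite /adj map_mxM trmx_mul. Qed.

Lemma adjD p q (A B : 'M[R[i]]_(p, q)) : adj (A + B) = adj A + adj B.
Proof. by rewrite /adj map_mxD linearD. Qed.

Lemma adjZ p q c (A : 'M[R[i]]_(p, q)) : adj (c *: A) = c^*%C *: adj A.
Proof. by rewrite /adj map_mxZ linearZ. Qed.

Lemma adjK p q (A : 'M[R[i]]_(p, q)) : adj (adj A) = A.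
Proof. by apply/matrixP => a b; rewrite !mxE conjcK. Qed.

Lemma adj_sum p q (I : finType) (F : I -> 'M[R[i]]_(p, q)) :
  adj (\sum_i F i) = \sum_i adj (F i).
Proof. by apply: (big_morph _ (@adjD p q)); rewrite /adj map_mx0 trmx0. Qed.

Definition cform d (N : 'M[R[i]]_d) (u w : 'cV[R[i]]_d) : R[i] :=
  (adj u *m N *m w) 0 0.

Definition rform d (N : 'M[R[i]]_d) (u w : 'cV[R[i]]_d) : R :=
  complex.Re (cform N u w).

Variable d : nat.
Implicit Types (N : 'M[R[i]]_d) (u w : 'cV[R[i]]_d).

Lemma cform_conj N u w : (cform N u w)^*%C = cform (adj N) w u.
Proof.
rewrite /cform; have -> : ((adj u *m N *m w) 0 0)^*%C = adj (adj u *m N *m w) 0 0.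
  by rewrite /adj !mxE.
by rewrite !adjM adjK mulmxA.
Qed.

Lemma rformC N u w : adj N = N -> rform N u w = rform N w u.
Proof. by move=> hermN; rewrite /rform -Re_conj cform_conj hermN. Qed.

Lemma rform_ge0 N :
  (forall u, 0 <= (adj u *m N *m u) 0 0) -> forall u, 0 <= rform N u u.
Proof. by move=> N_ge0 u; have := N_ge0 u; rewrite lecE => /andP[]. Qed.

Lemma cformDl N u1 u2 w : cform N (u1 + u2) w = cform N u1 w + cform N u2 w.
Proof. by rewrite /cform adjD !mulmxDl mxE. Qed.

Lemma cformDr N u w1 w2 : cform N u (w1 + w2) = cform N u w1 + cform N u w2.
Proof. by rewrite /cform mulmxDr mxE. Qed.

Lemma cformZl N c u w : cform N (c *: u) w = c^*%C * cform N u w.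
Proof. by rewrite /cform adjZ -!scalemxAl mxE. Qed.

Lemma cformZr N c u w : cform N u (c *: w) = c * cform N u w.
Proof. by rewrite /cform -scalemxAr mxE. Qed.

Lemma cform_sumM u w (I : finType) (F : I -> 'M[R[i]]_d) :
  cform (\sum_i F i) u w = \sum_i cform (F i) u w.
Proof. by rewrite /cform mulmx_sumr mulmx_suml summxE. Qed.

Lemma cform_suml N w (I : finType) (F : I -> 'cV[R[i]]_d) :
  cform N (\sum_i F i) w = \sum_i cform N (F i) w.
Proof. by rewrite /cform adj_sum !mulmx_suml summxE. Qed.

Lemma cform_sumr N u (I : finType) (F : I -> 'cV[R[i]]_d) :
  cform N u (\sum_i F i) = \sum_i cform N u (F i).
Proof. by rewrite /cform mulmx_sumr summxE. Qed.

Lemma rform_suml N w (I : finType) (c : I -> R) (F : I -> 'cV[R[i]]_d) :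
  rform N (\sum_i (c i)%:C%C *: F i) w = \sum_i c i * rform N (F i) w.
Proof.
rewrite /rform cform_suml Re_sum.
by apply: eq_bigr => i _; rewrite cformZl conjc_real Re_realM.
Qed.

Lemma rform_sumr N u (I : finType) (c : I -> R) (F : I -> 'cV[R[i]]_d) :
  rform N u (\sum_i (c i)%:C%C *: F i) = \sum_i c i * rform N u (F i).
Proof.
rewrite /rform cform_sumr Re_sum.
by apply: eq_bigr => i _; rewrite cformZr Re_realM.
Qed.

Lemma rform_expand N (s : R) u w : adj N = N ->
  rform N (s%:C%C *: u + w) (s%:C%C *: u + w) =
    s * s * rform N u u + 2 * s * rform N u w + rform N w w.
Proof.
move=> hermN; have := rformC u w hermN; rewrite /rform.
rewrite !cformDl !cformDr !cformZl !cformZr conjc_real !ReD !Re_realM.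
by move=> ->; ring.
Qed.


(* Discriminant of the nonnegative quadratic s |-> sum_l rform N (s a_l + b_l) (s a_l + b_l). *)
Lemma rform_cauchy_schwarz (L : finType) N (a b : L -> 'cV[R[i]]_d) :
  adj N = N -> (forall u, 0 <= rform N u u) ->
  (\sum_l rform N (a l) (b l)) ^+ 2 / (\sum_l rform N (a l) (a l))
    <= \sum_l rform N (b l) (b l).
Proof.
move=> hermN N_ge0; apply: quadratic_discriminant_le.
  by apply: sumr_ge0 => l _.
move=> s; rewrite !mulr_sumr -!big_split /=.
by apply: sumr_ge0 => l _; rewrite -rform_expand.
Qed.

Lemma quad_form_rform_sum n (L : finType) (N : 'M[R[i]]_d) (c : R)
    (f : L -> 'I_n -> 'cV[R[i]]_d) (w : 'cV[R]_n) :
  (w^T *m (\matrix_(j, k) (c * \sum_l rform N (f l k) (f l j))) *m w) 0 0 =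
    c * \sum_l rform N (\sum_k (w k 0)%:C%C *: f l k) (\sum_j (w j 0)%:C%C *: f l j).
Proof.
rewrite mxE.
transitivity (\sum_k \sum_j \sum_l c * (w k 0 * (w j 0 * rform N (f l k) (f l j)))).
  apply: eq_bigr => k _; rewrite !mxE mulr_suml; apply: eq_bigr => j _.
  by rewrite !mxE mulr_sumr mulr_sumr mulr_suml; apply: eq_bigr => l _; ring.
rewrite mulr_sumr exchange_big /=; under eq_bigr do rewrite exchange_big /=.
rewrite exchange_big /=; apply: eq_bigr => l _; rewrite exchange_big /=.
rewrite rform_suml mulr_sumr; apply: eq_bigr => k _.
by rewrite rform_sumr !mulr_sumr; apply: eq_bigr => j _; ring.
Qed.

End Forms.

Lemma quad_form_gram_sum (F : comPzRingType) n (O : finType) (c : O -> F)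
    (g : O -> 'I_n -> F) (w : 'cV[F]_n) :
  (w^T *m (\matrix_(j, k) \sum_o c o * g o j * g o k) *m w) 0 0 =
    \sum_o c o * (\sum_j w j 0 * g o j) ^+ 2.
Proof.
rewrite mxE.
transitivity (\sum_k \sum_j \sum_o c o * (w j 0 * g o j) * (w k 0 * g o k)).
  apply: eq_bigr => k _; rewrite !mxE mulr_suml; apply: eq_bigr => j _.
  by rewrite !mxE mulr_sumr mulr_suml; apply: eq_bigr => o _; ring.
rewrite exchange_big /=; under eq_bigr do rewrite exchange_big /=.
rewrite exchange_big /=; apply: eq_bigr => o _.
rewrite expr2 mulr_suml mulr_sumr; apply: eq_bigr => j _.
by rewrite !mulr_sumr; apply: eq_bigr => k _; ring.
Qed.

Lemma mxtrace_sum (F : pzSemiRingType) n (I : finType) (A : I -> 'M[F]_n) :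
  \tr (\sum_i A i) = \sum_i \tr (A i).
Proof. exact: raddf_sum. Qed.

Lemma mxtrace_rho_pure (R : realType) d (A B N : 'M[R[i]]_d) (psi : 'cV[R[i]]_d) :
  \tr (A *m rho_pure psi *m adj B *m N) = cform N (B *m psi) (A *m psi).
Proof.
rewrite /rho_pure /cform !mulmxA -[A *m psi *m adj psi *m adj B *m N]mulmxA.
rewrite -[A *m psi *m adj psi *m _]mulmxA mxtrace_mulC adjM.
by rewrite /mxtrace big_ord1 !mulmxA mxE.
Qed.

Section Channel.
Variables (R : realType) (d m : nat) (K : finType).
Variables (ER EI : K -> 'rV[R]_m -> 'M[R]_d) (psi : 'cV[R[i]]_d).
Local Notation E := (kraus ER EI).
Local Notation dE := (dkraus ER EI).

Lemma prob_rform (O : finType) (M : O -> 'M[R[i]]_d) o th :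
  prob ER EI psi M o th = \sum_l rform (M o) (E l th *m psi) (E l th *m psi).
Proof.
rewrite /prob /rho_out mulmx_suml mxtrace_sum Re_sum.
by apply: eq_bigr => l _; rewrite mxtrace_rho_pure.
Qed.

Lemma CE_mx_rform th : CE_mx ER EI psi th =
  \matrix_(j, k) (4 * \sum_l rform 1%:M (dE l k th *m psi) (dE l j th *m psi)).
Proof.
apply/matrixP => j k; rewrite !mxE; congr (_ * _); apply: eq_bigr => l _.
by rewrite -[X in \tr X]mulmx1 mxtrace_rho_pure.
Qed.

Lemma is_cderive_mx_kraus l th v :
  differentiable (ER l) th -> differentiable (EI l) th ->
  is_cderive_mx th v (E l) (cmx ('D_v (ER l) th) ('D_v (EI l) th)).
Proof.
by move=> dER dEI; apply: is_cderive_mx_cmx; exact: diff_derivable.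
Qed.

Lemma pdv_prob (O : finType) (M : O -> 'M[R[i]]_d) o j th :
  (forall l, differentiable (ER l) th /\ differentiable (EI l) th) ->
  adj (M o) = M o ->
  pdv (prob ER EI psi M o) j th =
    2 * \sum_l rform (M o) (E l th *m psi) (dE l j th *m psi).
Proof.
move=> E_diff hermM.
have dEl l : is_cderive_mx th (delta_mx 0 j) (E l) (dE l j th).
  by have [dER dEI] := E_diff l; exact: is_cderive_mx_kraus.
have drho := is_cderive_mx_sum (fun l => is_cderive_mxM
  (is_cderive_mxM (dEl l) (is_cderive_mx_cst _ _ (rho_pure psi)))
  (is_cderive_mx_adj (dEl l))).
have dp := is_cderive_trace (is_cderive_mxM drho (is_cderive_mx_cst _ _ (M o))).
apply: (eq_trans (@derive_val _ _ _ _ _ _ _ dp.1)).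
rewrite !mulmx0 !addr0 mulmx_suml mxtrace_sum Re_sum mulr_sumr.
apply: eq_bigr => l _.
rewrite mulmx0 addr0 mulmxDl mxtraceD ReD !mxtrace_rho_pure -/(rform _ _ _) -/(rform _ _ _).
by rewrite (rformC _ _ hermM); ring.
Qed.

End Channel.

Theorem lemma14 (R : realType) (d m : nat) (K O : finType)
  (ER EI : K -> 'rV[R]_m -> 'M[R]_d) (psi : 'cV[R[i]]_d)
  (M : O -> 'M[R[i]]_d) (th : 'rV[R]_m) :
  is_kraus_family ER EI ->
  (adj psi *m psi) 0 0 = 1 ->
  is_POVM M ->
  loewner_le (fisher_mx ER EI psi M th) (CE_mx ER EI psi th).
Proof.
move=> [E_diff _] _ [hermM [M_ge0 sumM]] w.
pose a l := kraus ER EI l th *m psi.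
pose b l := \sum_j (w j 0)%:C%C *: (dkraus ER EI l j th *m psi).
have grad_prob o : \sum_j w j 0 * pdv (prob ER EI psi M o) j th =
    2 * \sum_l rform (M o) (a l) (b l).
  under eq_bigr do rewrite pdv_prob //.
  under [in RHS]eq_bigr do rewrite rform_sumr.
  rewrite exchange_big mulr_sumr; apply: eq_bigr => j _.
  by rewrite !mulr_sumr; apply: eq_bigr => l _; ring.
have resolve_identity l :
    \sum_o rform (M o) (b l) (b l) = rform 1%:M (b l) (b l).
  by rewrite -sumM /rform cform_sumM Re_sum.
rewrite CE_mx_rform quad_form_rform_sum /fisher_mx quad_form_gram_sum.
apply: (@le_trans _ _ (\sum_o 4 * \sum_l rform (M o) (b l) (b l))).
  apply: ler_sum => o _; rewrite prob_rform grad_prob.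
  have -> : forall P Q : R, P^-1 * (2 * Q) ^+ 2 = 4 * (Q ^+ 2 / P) by move=> P Q; ring.
  rewrite ler_pM2l //.
  exact: rform_cauchy_schwarz (hermM o) (rform_ge0 (M_ge0 o)).
by rewrite -mulr_sumr exchange_big /=; under eq_bigr do rewrite resolve_identity.
Qed.
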